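(* Let $h_1,h_2\in\mathbb{C}\setminus\{0\}$ with $|h_1|>|h_2|$, deadlines $D_1<D_2$, minimum blocklength $\hat m>0$, power budget $P_{\max}>0$, packet sizes $N_1,N_2>0$ and error probabilities $\epsilon_1,\epsilon_2\in(0,1)$. For $k=1,2$ define, for $m>0,\gamma>0$, $$F_k(m,\gamma)=\sqrt{\frac{1}{m}\left(1-\frac{1}{(\gamma+1)^2}\right)}\,\frac{Q^{-1}(\epsilon_k)}{\ln 2}-\log_2(1+\gamma)+\frac{N_k}{m},$$ and let $\Gamma_k(m)$ denote the implicit function defined by $F_k(m,\Gamma_k(m))=0$, $\Gamma_k(m)>0$. Consider the problem $$\min_{\{m_k,p_k,\gamma_k\}_{k=1,2}} m_1p_1+m_2p_2$$ subject to $F_k(m_k,\gamma_k)=0$, $\hat m\le m_k$, $p_k\ge0$ for $k=1,2$, $p_1+p_2\le P_{\max}$, $m_1\le D_1$, $m_2\le m_1$, $\gamma_1=p_1|h_1|^2$, $\gamma_2=\frac{p_2|h_2|^2}{p_1|h_2|^2+1}$. If $\frac{Q^{-1}(\epsilon_k)}{\sqrt{N_k}}\le \frac{2\sqrt{\ln 2}}{4-\sqrt2}=0.64394\ldots$ for $k=1,2$ and the problem is feasible, then an optimal solution is $$m_1^*=m_2^*=D_1,\quad \gamma_k^*=\Gamma_k(D_1)\ (k=1,2),\quad p_1^*=\frac{\gamma_1^*}{|h_1|^2},\quad p_2^*=\frac{\gamma_1^*\gamma_2^*}{|h_1|^2}+\frac{\gamma_2^*}{|h_2|^2}.$$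
   Context: $Q^{-1}$ is the inverse of the Gaussian Q-function. The setting is a two-user single-antenna downlink with superposition coding and unit noise variances, where receiver 2's blocklength is forced to be at most receiver 1's so that receiver 1 can perform successive interference cancellation, while receiver 2 treats receiver 1's signal as noise. Blocklengths $m_k$ are treated as continuous variables. The constraint $F_k(m_k,\gamma_k)=0$ is the finite-blocklength rate relation $\frac{N_k}{m_k}=\log_2(1+\gamma_k)-\sqrt{\frac{1}{m_k}\big(1-\frac{1}{(1+\gamma_k)^2}\big)}\frac{Q^{-1}(\epsilon_k)}{\ln2}$. *)

From Stdlib Require Import Reals Lra ClassicalEpsilon.
From Coquelicot Require Import Coquelicot.
Open Scope R_scope.

Definition Qfun (x : R) : R :=
  / sqrt (2 * PI) *
  RInt_gen (fun t => exp (- (t ^ 2) / 2)) (at_point x) (Rbar_locally p_infty).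

(* Inverse Q-function: the (unique, since Q is a strictly decreasing
   bijection R -> (0,1)) x with Q x = eps. *)
Definition Qinv (eps : R) : R :=
  epsilon (inhabits 0) (fun x => Qfun x = eps).

Definition log2 (x : R) : R := ln x / ln 2.

Definition Ffun (eps N m g : R) : R :=
  sqrt ((1 / m) * (1 - 1 / (g + 1) ^ 2)) * (Qinv eps / ln 2)
  - log2 (1 + g) + N / m.

Definition Gamma (eps N m : R) : R :=
  epsilon (inhabits 0) (fun g => 0 < g /\ Ffun eps N m g = 0).

(* Feasible set of the optimization problem (blocklengths are real). *)
Definition feasible (h1 h2 : C) (mhat Pmax D1 N1 N2 eps1 eps2 : R)
    (m1 m2 p1 p2 g1 g2 : R) : Prop :=
  Ffun eps1 N1 m1 g1 = 0 /\ Ffun eps2 N2 m2 g2 = 0 /\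
  mhat <= m1 /\ mhat <= m2 /\ 0 <= p1 /\ 0 <= p2 /\
  p1 + p2 <= Pmax /\ m1 <= D1 /\ m2 <= m1 /\
  g1 = p1 * Cmod h1 ^ 2 /\
  g2 = p2 * Cmod h2 ^ 2 / (p1 * Cmod h2 ^ 2 + 1).

From Stdlib Require Import Reals Lra Psatz ClassicalEpsilon.
From Coquelicot Require Import Coquelicot.
Open Scope R_scope.

(* Write [s = ln (1 + gamma)], [l = ln 2] and [r = Qinv eps / sqrt N].  Multiplied by
   [l], the constraint [F (m, gamma) = 0] reads [Qinv eps * sqrt V(gamma) / sqrt m - s + l N / m = 0]
   with [V] the channel dispersion.  For one user this gives two monotonicity facts.
   (i) [sqrt m * F (m, gamma)] is nonincreasing in [m], and once [F (D, .)] is nonpositive it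
   stays negative for larger SNRs; so a root [(m, gamma)] with [m <= D] forces the root
   [Gamma (D) <= gamma].  (ii) [m gamma = N rho(s) ^ 2], where [rho] is the positive root of
   [rho ^ 2 = r P(s) rho + l p(s)] with [p(s) = (e^s - 1) / s] ([snr_rate]) and
   [P(s) = (1 - e^-s) sqrt (e^s + 1) / s] ([disp_rate]); a sign analysis of
   [r P' rho + l p'], which is where the bound on [r] enters, shows that [rho] is nondecreasing, so [D Gamma(D) <= m gamma].
   With successive interference cancellation the powers are [p1 = gamma1 / |h1|^2] and
   [p2 = gamma2 p1 + gamma2 / |h2|^2], so the cost
   [m1 gamma1 / |h1|^2 + m2 gamma2 (p1 + 1 / |h2|^2)] is minimised by [m1 = m2 = D1]. *)

Lemma nondecreasing_of_is_derive (f df : R -> R) (a : R) :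
  (forall x, a <= x -> is_derive f x (df x)) ->
  (forall x, a <= x -> 0 <= df x) ->
  forall y, a <= y -> f a <= f y.
Proof.
  intros Hd Hpos y Hy.
  destruct (Req_dec a y) as [<-|_]; [lra|].
  destruct (MVT_gen f a y df) as [c [Hc Heq]];
    rewrite ?Rmin_left, ?Rmax_right in * by lra.
  - intros x Hx; apply Hd; lra.
  - intros x Hx. apply continuity_pt_filterlim, (ex_derive_continuous (V := R_NormedModule)).
    exists (df x); apply Hd; lra.
  - assert (0 <= df c * (y - a)) by (apply Rmult_le_pos; [apply Hpos|]; lra). lra.
Qed.

Lemma exp_neg_le_taylor2 s : 0 <= s -> exp (- s) <= 1 - s + s ^ 2 / 2.
Proof.
  intros Hs.
  apply (nondecreasing_of_is_derive (fun x => 1 - x + x ^ 2 / 2 - exp (- x))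
           (fun x => x - 1 + exp (- x)) 0) in Hs.
  - rewrite Ropp_0, exp_0 in Hs. lra.
  - intros x _. auto_derive; trivial. field.
  - intros x _. generalize (exp_ineq1_le (- x)). lra.
Qed.

Lemma taylor3_le_exp_neg s : 0 <= s -> 1 - s + s ^ 2 / 2 - s ^ 3 / 6 <= exp (- s).
Proof.
  intros Hs.
  apply (nondecreasing_of_is_derive (fun x => exp (- x) - (1 - x + x ^ 2 / 2 - x ^ 3 / 6))
           (fun x => 1 - x + x ^ 2 / 2 - exp (- x)) 0) in Hs.
  - rewrite Ropp_0, exp_0 in Hs. lra.
  - intros x _. auto_derive; trivial. field.
  - intros x Hx. generalize (exp_neg_le_taylor2 x Hx). lra.
Qed.

Lemma exp_mul_2_sub_le s : 0 <= s -> exp s * (2 - s) <= 2 + s.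
Proof.
  intros Hs.
  assert (Hinv : exp s * exp (- s) = 1) by (rewrite <- exp_plus, Rplus_opp_r; apply exp_0).
  apply (nondecreasing_of_is_derive (fun x => (2 + x) * exp (- x) - (2 - x))
           (fun x => 1 - (1 + x) * exp (- x)) 0) in Hs.
  - rewrite Ropp_0, exp_0 in Hs. assert (0 < exp s) by apply exp_pos. nra.
  - intros x _. auto_derive; trivial. field.
  - intros x _.
    assert (exp x * exp (- x) = 1) by (rewrite <- exp_plus, Rplus_opp_r; apply exp_0).
    generalize (exp_ineq1_le x) (exp_pos (- x)). nra.
Qed.

Lemma one_sub_exp_div_sq_antitone a b : 0 < a -> a <= b ->
  (1 - exp (-2 * b)) / b ^ 2 <= (1 - exp (-2 * a)) / a ^ 2.
Proof.
  intros Ha Hab.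
  apply (nondecreasing_of_is_derive (fun x => - ((1 - exp (-2 * x)) / x ^ 2))
           (fun x => 2 * (1 - (1 + x) * exp (-2 * x)) / x ^ 3) a) in Hab.
  - lra.
  - intros x Hx. auto_derive; [intro; nra|]. field; lra.
  - intros x Hx. apply Rmult_le_pos; [|apply Rlt_le, Rinv_0_lt_compat, pow_lt; lra].
    assert (exp (2 * x) * exp (-2 * x) = 1)
      by (rewrite <- exp_plus; replace (2 * x + -2 * x) with 0 by ring; apply exp_0).
    generalize (exp_ineq1_le (2 * x)) (exp_pos (-2 * x)). nra.
Qed.

Lemma exp_disp_slope_ineq s : 0 <= s ->
  37 / 20 * (2 * (exp s ^ 2 - 1) - s * (exp s ^ 2 + exp s + 2))
  <= 4 * exp s * (s * exp s - exp s + 1).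
Proof.
  intros Hs.
  assert (Hyz : exp s * exp (- s) = 1) by (rewrite <- exp_plus, Rplus_opp_r; apply exp_0).
  assert (Hy := exp_pos s). assert (Hz := exp_pos (- s)).
  set (y := exp s) in *. set (z := exp (- s)) in *. set (K := 37 / 20).
  (* Divided by [y ^ 2], the claim is quadratic in [z = exp (- s)]; for small [s] the cubic
     Taylor bound on [z] turns it into a polynomial inequality. *)
  assert (Hquad : 0 <= (4 + K) * s - 4 - 2 * K + z * (4 + K * s) + 2 * K * (1 + s) * z ^ 2).
  { destruct (Rle_lt_dec (3 / 2) s) as [Hbig|Hsmall].
    - unfold K. assert (0 <= z * (4 + 37 / 20 * s)) by nra.
      assert (0 <= 2 * (37 / 20) * (1 + s) * z ^ 2) by nra. nra.
    - set (L := 1 - s + s ^ 2 / 2 - s ^ 3 / 6).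
      assert (HLz : L <= z) by apply (taylor3_le_exp_neg s Hs).
      assert (HL : 0 <= L) by (unfold L; nra).
      assert (Hquint : 0 <= 3/20 + 109/40*s - 37/12*s^2 + 37/24*s^3 - 37/72*s^4 + 37/360*s^5)
        by nra.
      assert (HatL : (4 + K) * s - 4 - 2 * K + L * (4 + K * s) + 2 * K * (1 + s) * L ^ 2
                     = s ^ 2 * (3/20 + 109/40*s - 37/12*s^2 + 37/24*s^3 - 37/72*s^4 + 37/360*s^5))
        by (unfold L, K; field).
      assert (L * (4 + K * s) <= z * (4 + K * s)) by (apply Rmult_le_compat_r; unfold K; lra).
      assert (2 * K * (1 + s) * L ^ 2 <= 2 * K * (1 + s) * z ^ 2)
        by (apply Rmult_le_compat_l; unfold K; nra).
      nra. }
  assert (Hid : 4 * y * (s * y - y + 1) - K * (2 * (y ^ 2 - 1) - s * (y ^ 2 + y + 2))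
     = y ^ 2 * ((4 + K) * s - 4 - 2 * K + z * (4 + K * s) + 2 * K * (1 + s) * z ^ 2)).
  { replace (y ^ 2 * ((4 + K) * s - 4 - 2 * K + z * (4 + K * s) + 2 * K * (1 + s) * z ^ 2))
      with (y ^ 2 * ((4 + K) * s - 4 - 2 * K) + y * (y * z) * (4 + K * s)
            + 2 * K * (1 + s) * (y * z) ^ 2) by ring.
    rewrite Hyz. ring. }
  assert (0 <= y ^ 2 * ((4 + K) * s - 4 - 2 * K + z * (4 + K * s) + 2 * K * (1 + s) * z ^ 2))
    by (apply Rmult_le_pos; nra).
  fold K. lra.
Qed.

Definition qroot (b c : R) : R := (b + sqrt (b ^ 2 + 4 * c)) / 2.

Lemma sqrt_discr b c : 0 <= b ^ 2 + 4 * c ->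
  0 <= sqrt (b ^ 2 + 4 * c) /\ sqrt (b ^ 2 + 4 * c) * sqrt (b ^ 2 + 4 * c) = b ^ 2 + 4 * c.
Proof. intros Hd. split; [apply sqrt_pos | apply sqrt_sqrt, Hd]. Qed.

Lemma qroot_sq b c : 0 <= b ^ 2 + 4 * c -> qroot b c ^ 2 = b * qroot b c + c.
Proof.
  intros Hd. destruct (sqrt_discr b c Hd) as [_ HS]. unfold qroot. nra.
Qed.

Lemma qroot_pos b c : 0 < c -> 0 < qroot b c.
Proof.
  intros Hc. destruct (sqrt_discr b c ltac:(nra)) as [HS0 HS]. unfold qroot. nra.
Qed.

Lemma qroot_unique b c x : 0 <= c -> 0 < x -> x ^ 2 = b * x + c -> x = qroot b c.
Proof.
  intros Hc Hx Hq.
  assert (Hpos : 0 <= 2 * x - b) by nra.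
  assert (Hdis : b ^ 2 + 4 * c = (2 * x - b) ^ 2) by nra.
  unfold qroot. rewrite Hdis, sqrt_pow2 by exact Hpos. field.
Qed.

Lemma is_derive_qroot (b c : R -> R) (db dc x : R) :
  is_derive b x db -> is_derive c x dc -> 0 < b x ^ 2 + 4 * c x ->
  is_derive (fun t => qroot (b t) (c t)) x
    ((db * qroot (b x) (c x) + dc) / sqrt (b x ^ 2 + 4 * c x)).
Proof.
  intros Hb Hc Hd. unfold qroot.
  assert (HS : 0 < sqrt (b x ^ 2 + 4 * c x)) by (apply sqrt_lt_R0, Hd).
  auto_derive.
  - repeat split; try (eexists; eassumption). nra.
  - replace (Derive (fun t => b t) x) with db by (symmetry; now apply is_derive_unique).
    replace (Derive (fun t => c t) x) with dc by (symmetry; now apply is_derive_unique).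
    replace (b x * (b x * 1) + 4 * c x) with (b x ^ 2 + 4 * c x) by ring.
    field. lra.
Qed.

Lemma qroot_nondecreasing (b c db dc : R -> R) (a : R) :
  (forall x, a <= x -> is_derive b x (db x)) ->
  (forall x, a <= x -> is_derive c x (dc x)) ->
  (forall x, a <= x -> 0 < c x) ->
  (forall x, a <= x -> 0 <= db x * qroot (b x) (c x) + dc x) ->
  forall y, a <= y -> qroot (b a) (c a) <= qroot (b y) (c y).
Proof.
  intros Hb Hc Hc0 Hslope.
  apply (nondecreasing_of_is_derive (fun t => qroot (b t) (c t))
           (fun x => (db x * qroot (b x) (c x) + dc x) / sqrt (b x ^ 2 + 4 * c x))).
  - intros x Hx. apply is_derive_qroot; auto.
    specialize (Hc0 x Hx). nra.
  - intros x Hx. apply Rmult_le_pos; [auto|].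
    apply Rlt_le, Rinv_0_lt_compat, sqrt_lt_R0. specialize (Hc0 x Hx). nra.
Qed.

Lemma qroot_mul_le r P p l Y : 0 < r -> r ^ 2 <= 3 / 5 * l -> 0 < p ->
  0 <= P <= Y -> p <= Y ^ 2 / 2 ->
  r * qroot (r * P) (l * p) <= 37 / 40 * l * Y.
Proof.
  intros Hr Hrl Hp HP HpY.
  assert (Hl : 0 < l) by nra.
  assert (Hrho := qroot_pos (r * P) (l * p) ltac:(nra)).
  assert (Hq := qroot_sq (r * P) (l * p) ltac:(nra)).
  set (rho := qroot (r * P) (l * p)) in *.
  (* [t = r rho / (l Y)] satisfies [t ^ 2 <= 3/5 t + 3/10], whose positive root is below [37/40] *)
  assert (Ht : (r * rho) ^ 2 <= 3 / 5 * (l * Y) * (r * rho) + 3 / 10 * (l * Y) ^ 2).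
  { replace ((r * rho) ^ 2) with (r ^ 2 * P * (r * rho) + r ^ 2 * (l * p))
      by (rewrite Rpow_mult_distr, Hq; ring).
    assert (r ^ 2 * P * (r * rho) <= 3 / 5 * l * Y * (r * rho))
      by (apply Rmult_le_compat_r; [nra|]; apply Rmult_le_compat; nra).
    assert (r ^ 2 * (l * p) <= 3 / 5 * l * (l * (Y ^ 2 / 2)))
      by (apply Rmult_le_compat; nra).
    nra. }
  assert (HlY : 0 <= l * Y) by nra.
  destruct (Rle_lt_dec (r * rho) (37 / 40 * l * Y)) as [|Hgt]; [lra|].
  assert (0 < (r * rho - 37 / 40 * (l * Y)) * (r * rho + 13 / 40 * (l * Y)))
    by (apply Rmult_lt_0_compat; nra).
  nra.
Qed.

Lemma ln2_pos : 0 < ln 2.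
Proof. rewrite <- ln_1. apply ln_increasing; lra. Qed.

(* In the capacity [s = ln (1 + g)]: [snr_rate s = g / s] and
   [disp_rate s = sqrt_disp g * sqrt g / s] (see [snr_rate_ln1p], [disp_rate_ln1p]). *)
Definition snr_rate (s : R) : R := (exp s - 1) / s.
Definition snr_rate_deriv (s : R) : R := (s * exp s - exp s + 1) / s ^ 2.
Definition disp_rate (s : R) : R := (exp s - 1) * sqrt (exp s + 1) / (exp s * s).
Definition disp_rate_deriv (s : R) : R :=
  (s * (exp s ^ 2 + exp s + 2) - 2 * (exp s ^ 2 - 1)) / (2 * exp s * s ^ 2 * sqrt (exp s + 1)).

Lemma sqrt_exp_add1 s : 0 < sqrt (exp s + 1) /\ sqrt (exp s + 1) * sqrt (exp s + 1) = exp s + 1.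
Proof.
  assert (Hy := exp_pos s).
  split; [apply sqrt_lt_R0 | apply sqrt_sqrt]; lra.
Qed.

Lemma is_derive_snr_rate s : 0 < s -> is_derive snr_rate s (snr_rate_deriv s).
Proof.
  intros Hs. unfold snr_rate, snr_rate_deriv. auto_derive; [lra|]. field. lra.
Qed.

Lemma is_derive_disp_rate s : 0 < s -> is_derive disp_rate s (disp_rate_deriv s).
Proof.
  intros Hs. unfold disp_rate, disp_rate_deriv.
  assert (Hy := exp_pos s). destruct (sqrt_exp_add1 s) as [HY HYY].
  auto_derive; [repeat split; nra|].
  set (Y := sqrt (exp s + 1)) in *. set (y := exp s) in *.
  clearbody Y y. assert (y = Y * Y - 1) as -> by lra.
  field. nra.
Qed.

Lemma snr_rate_pos s : 0 < s -> 0 < snr_rate s.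
Proof.
  intros Hs. unfold snr_rate. apply Rdiv_lt_0_compat; [|lra].
  generalize (exp_ineq1 s ltac:(lra)). lra.
Qed.

Lemma snr_rate_deriv_nonneg s : 0 < s -> 0 <= snr_rate_deriv s.
Proof.
  intros Hs. unfold snr_rate_deriv.
  apply Rmult_le_pos; [|apply Rlt_le, Rinv_0_lt_compat, pow_lt; lra].
  assert (exp s * exp (- s) = 1) by (rewrite <- exp_plus, Rplus_opp_r; apply exp_0).
  generalize (exp_ineq1_le (- s)) (exp_pos s). nra.
Qed.

Lemma snr_rate_le s : 0 < s -> snr_rate s <= sqrt (exp s + 1) ^ 2 / 2.
Proof.
  intros Hs. unfold snr_rate. rewrite pow2_sqrt by (generalize (exp_pos s); lra).
  apply Rmult_le_reg_r with s; [lra|].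
  replace ((exp s - 1) / s * s) with (exp s - 1) by (field; lra).
  generalize (exp_mul_2_sub_le s ltac:(lra)). lra.
Qed.

Lemma disp_rate_bounds s : 0 < s -> 0 < disp_rate s <= sqrt (exp s + 1).
Proof.
  intros Hs. unfold disp_rate.
  assert (Hy := exp_ineq1 s ltac:(lra)). destruct (sqrt_exp_add1 s) as [HY _].
  assert (exp s * exp (- s) = 1) by (rewrite <- exp_plus, Rplus_opp_r; apply exp_0).
  assert (Hsy : exp s - 1 <= exp s * s) by (generalize (exp_ineq1_le (- s)) (exp_pos (- s)); nra).
  split.
  - apply Rdiv_lt_0_compat; nra.
  - apply Rmult_le_reg_r with (exp s * s); [nra|].
    replace ((exp s - 1) * sqrt (exp s + 1) / (exp s * s) * (exp s * s))
      with ((exp s - 1) * sqrt (exp s + 1)) by (field; nra).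
    nra.
Qed.

Lemma snr_rate_mul_disp_rate_deriv_le s : 0 < s ->
  snr_rate s * disp_rate_deriv s <= disp_rate s * snr_rate_deriv s.
Proof.
  intros Hs.
  assert (Hy := exp_ineq1 s ltac:(lra)). destruct (sqrt_exp_add1 s) as [HY HYY].
  assert (Hdiff : disp_rate s * snr_rate_deriv s - snr_rate s * disp_rate_deriv s
    = (exp s - 1) ^ 2 * (exp s + 2) / (2 * exp s * s ^ 2 * sqrt (exp s + 1))).
  { unfold snr_rate, disp_rate, snr_rate_deriv, disp_rate_deriv.
    set (Y := sqrt (exp s + 1)) in *. set (y := exp s) in *. clearbody Y y.
    assert (y = Y * Y - 1) as -> by lra. field. nra. }
  assert (0 <= (exp s - 1) ^ 2 * (exp s + 2) / (2 * exp s * s ^ 2 * sqrt (exp s + 1))).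
  { assert (0 < s ^ 2) by (apply pow_lt; lra).
    apply Rmult_le_pos; [apply Rmult_le_pos; [apply pow2_ge_0 | lra]|].
    apply Rlt_le, Rinv_0_lt_compat. repeat apply Rmult_lt_0_compat; lra. }
  lra.
Qed.

Lemma disp_rate_deriv_ge s : 0 < s ->
  - (37 / 40 * sqrt (exp s + 1) * disp_rate_deriv s) <= snr_rate_deriv s.
Proof.
  intros Hs. unfold snr_rate_deriv, disp_rate_deriv.
  assert (Hkey := exp_disp_slope_ineq s ltac:(lra)). assert (0 < s ^ 2) by (apply pow_lt; lra).
  assert (Hy := exp_pos s). destruct (sqrt_exp_add1 s) as [HY HYY].
  set (Y := sqrt (exp s + 1)) in *. set (y := exp s) in *. clearbody Y y.
  replace (- (37 / 40 * Y * ((s * (y ^ 2 + y + 2) - 2 * (y ^ 2 - 1)) / (2 * y * s ^ 2 * Y))))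
    with (37 / 20 * (2 * (y ^ 2 - 1) - s * (y ^ 2 + y + 2)) / (4 * y * s ^ 2)) by (field; nra).
  replace ((s * y - y + 1) / s ^ 2) with (4 * y * (s * y - y + 1) / (4 * y * s ^ 2)) by (field; nra).
  apply Rmult_le_compat_r; [apply Rlt_le, Rinv_0_lt_compat; nra | exact Hkey].
Qed.

Definition energy_root (r s : R) : R := qroot (r * disp_rate s) (ln 2 * snr_rate s).

Lemma energy_root_slope_nonneg r s : r <= 0 \/ r ^ 2 <= 3 / 5 * ln 2 -> 0 < s ->
  0 <= r * disp_rate_deriv s * energy_root r s + ln 2 * snr_rate_deriv s.
Proof.
  intros Hr Hs.
  assert (Hl := ln2_pos). assert (Hp := snr_rate_pos s Hs).
  assert (Hdp := snr_rate_deriv_nonneg s Hs). assert (HP := disp_rate_bounds s Hs).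
  assert (Hrho := qroot_pos (r * disp_rate s) (ln 2 * snr_rate s) ltac:(nra)).
  assert (Hq := qroot_sq (r * disp_rate s) (ln 2 * snr_rate s) ltac:(nra)).
  fold (energy_root r s) in Hrho, Hq.
  destruct (Rle_lt_dec 0 (r * disp_rate_deriv s)) as [Hsign|Hsign]; [nra|].
  destruct (Rle_lt_dec r 0) as [Hneg|Hpos].
  - (* [rho (rho - r P) = l p] bounds [- r rho P], and [p P' <= P p'] transfers it to [P'] *)
    assert (HdP : 0 < disp_rate_deriv s) by nra.
    assert (- r * energy_root r s * disp_rate s <= ln 2 * snr_rate s) by nra.
    assert (Htr := snr_rate_mul_disp_rate_deriv_le s Hs).
    apply Rmult_le_reg_r with (disp_rate s); [lra|].
    nra.
  - destruct Hr as [|Hr]; [lra|].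
    assert (HdP : disp_rate_deriv s < 0) by nra.
    assert (Hbound := qroot_mul_le r (disp_rate s) (snr_rate s) (ln 2) (sqrt (exp s + 1))
                        Hpos Hr Hp ltac:(lra) (snr_rate_le s Hs)).
    fold (energy_root r s) in Hbound.
    assert (Hder := disp_rate_deriv_ge s Hs).
    nra.
Qed.

Lemma energy_root_nondecreasing r s1 s2 : r <= 0 \/ r ^ 2 <= 3 / 5 * ln 2 ->
  0 < s1 -> s1 <= s2 -> energy_root r s1 <= energy_root r s2.
Proof.
  intros Hr Hs1 Hs12. unfold energy_root.
  apply (qroot_nondecreasing (fun s => r * disp_rate s) (fun s => ln 2 * snr_rate s)
           (fun s => r * disp_rate_deriv s) (fun s => ln 2 * snr_rate_deriv s) s1);
    [intros s Hs .. | exact Hs12].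
  - apply is_derive_scal, is_derive_disp_rate; lra.
  - apply is_derive_scal, is_derive_snr_rate; lra.
  - generalize ln2_pos (snr_rate_pos s ltac:(lra)). nra.
  - apply energy_root_slope_nonneg; [exact Hr | lra].
Qed.

Definition sqrt_disp (g : R) : R := sqrt (1 - 1 / (g + 1) ^ 2).

Lemma disp_nonneg g : 0 <= g -> 0 <= 1 - 1 / (g + 1) ^ 2.
Proof.
  intros Hg. assert (1 / (g + 1) ^ 2 <= 1); [|lra].
  apply Rmult_le_reg_r with ((g + 1) ^ 2); [nra|].
  replace (1 / (g + 1) ^ 2 * (g + 1) ^ 2) with 1 by (field; lra). nra.
Qed.

Lemma sqrt_disp_nondecreasing g g' : 0 <= g -> g <= g' -> sqrt_disp g <= sqrt_disp g'.
Proof.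
  intros Hg Hgg'. apply sqrt_le_1; [apply disp_nonneg; lra .. |].
  assert (1 / (g' + 1) ^ 2 <= 1 / (g + 1) ^ 2); [|lra].
  apply Rmult_le_reg_r with ((g + 1) ^ 2 * (g' + 1) ^ 2); [nra|].
  replace (1 / (g' + 1) ^ 2 * ((g + 1) ^ 2 * (g' + 1) ^ 2)) with ((g + 1) ^ 2) by (field; lra).
  replace (1 / (g + 1) ^ 2 * ((g + 1) ^ 2 * (g' + 1) ^ 2)) with ((g' + 1) ^ 2) by (field; lra).
  nra.
Qed.

Lemma ln1p_pos g : 0 < g -> 0 < ln (1 + g).
Proof. intros Hg. rewrite <- ln_1. apply ln_increasing; lra. Qed.

Lemma sqrt_disp_div_ln1p g : 0 < g ->
  sqrt_disp g / ln (1 + g) = sqrt ((1 - exp (-2 * ln (1 + g))) / ln (1 + g) ^ 2).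
Proof.
  intros Hg. assert (Hs := ln1p_pos g Hg).
  replace (exp (-2 * ln (1 + g))) with (1 / (g + 1) ^ 2).
  - rewrite sqrt_div_alt, sqrt_pow2 by (try apply pow_lt; lra). reflexivity.
  - replace (-2 * ln (1 + g)) with (- (ln (1 + g) + ln (1 + g))) by ring.
    rewrite exp_Ropp, exp_plus, exp_ln by lra. field. lra.
Qed.

Lemma sqrt_disp_div_ln1p_antitone g g' : 0 < g -> g <= g' ->
  sqrt_disp g' / ln (1 + g') <= sqrt_disp g / ln (1 + g).
Proof.
  intros Hg Hgg'.
  rewrite !sqrt_disp_div_ln1p by lra.
  apply sqrt_le_1_alt, one_sub_exp_div_sq_antitone; [apply ln1p_pos; lra|].
  destruct (Req_dec g g') as [<-|]; [lra|]. apply Rlt_le, ln_increasing; lra.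
Qed.

Lemma Ffun_mul_ln2 eps N m g : 0 < m -> 0 <= g ->
  Ffun eps N m g * ln 2 = Qinv eps * sqrt_disp g / sqrt m - ln (1 + g) + ln 2 * N / m.
Proof.
  intros Hm Hg. unfold Ffun, log2, sqrt_disp.
  assert (Hl := ln2_pos). assert (Hsm : 0 < sqrt m) by (apply sqrt_lt_R0; lra).
  rewrite sqrt_mult_alt by (apply Rlt_le, Rdiv_lt_0_compat; lra).
  rewrite sqrt_div_alt, sqrt_1 by lra.
  field. lra.
Qed.

Lemma sqrt_mul_Ffun_mul_ln2 eps N m g : 0 < m -> 0 <= g ->
  sqrt m * Ffun eps N m g * ln 2
  = Qinv eps * sqrt_disp g - sqrt m * ln (1 + g) + ln 2 * N / sqrt m.
Proof.
  intros Hm Hg. assert (Hsm : 0 < sqrt m) by (apply sqrt_lt_R0; lra).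
  rewrite Rmult_assoc, Ffun_mul_ln2 by lra.
  replace (ln 2 * N / m) with (ln 2 * N / (sqrt m * sqrt m)) by (rewrite sqrt_sqrt; lra).
  field. lra.
Qed.

Lemma sqrt_mul_Ffun_antitone eps N m D g : 0 < N -> 0 < m -> m <= D -> 0 <= g ->
  sqrt D * Ffun eps N D g <= sqrt m * Ffun eps N m g.
Proof.
  intros HN Hm HmD Hg.
  assert (Hl := ln2_pos). assert (Hs : 0 <= ln (1 + g)).
  { destruct (Req_dec g 0) as [->|]; [rewrite Rplus_0_r, ln_1; lra|].
    apply Rlt_le, ln1p_pos; lra. }
  assert (Hsm : 0 < sqrt m) by (apply sqrt_lt_R0; lra).
  assert (HsmD : sqrt m <= sqrt D) by (apply sqrt_le_1_alt; lra).
  apply Rmult_le_reg_r with (ln 2); [exact Hl|].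
  rewrite !sqrt_mul_Ffun_mul_ln2 by lra.
  assert (ln 2 * N / sqrt D <= ln 2 * N / sqrt m).
  { apply Rmult_le_compat_l; [nra|]. apply Rinv_le_contravar; lra. }
  nra.
Qed.

Lemma Ffun_nonpos_of_root eps N m D g : 0 < N -> 0 < m -> m <= D -> 0 <= g ->
  Ffun eps N m g = 0 -> Ffun eps N D g <= 0.
Proof.
  intros HN Hm HmD Hg HF.
  assert (H := sqrt_mul_Ffun_antitone eps N m D g HN Hm HmD Hg).
  rewrite HF, Rmult_0_r in H.
  assert (0 < sqrt D) by (apply sqrt_lt_R0; lra). nra.
Qed.

Lemma Ffun_neg_of_nonpos eps N D g g' : 0 < N -> 0 < D -> 0 < g -> g < g' ->
  Ffun eps N D g <= 0 -> Ffun eps N D g' < 0.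
Proof.
  intros HN HD Hg Hgg' HF.
  assert (Hl := ln2_pos).
  assert (Hs := ln1p_pos g Hg). assert (Hs' := ln1p_pos g' ltac:(lra)).
  assert (Hss' : ln (1 + g) < ln (1 + g')) by (apply ln_increasing; lra).
  assert (HsD : 0 < sqrt D) by (apply sqrt_lt_R0; lra).
  apply Rmult_lt_reg_r with (ln 2); [exact Hl|]. rewrite Rmult_0_l.
  apply (Rmult_le_compat_r (ln 2)) in HF; [|lra]. rewrite Rmult_0_l in HF.
  rewrite Ffun_mul_ln2 in * by lra.
  set (c := Qinv eps / sqrt D). set (K := ln 2 * N / D) in *.
  assert (HK : 0 < K) by (apply Rdiv_lt_0_compat; nra).
  replace (Qinv eps * sqrt_disp g / sqrt D) with (c * sqrt_disp g) in HF by (unfold c; field; lra).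
  replace (Qinv eps * sqrt_disp g' / sqrt D) with (c * sqrt_disp g') by (unfold c; field; lra).
  (* For [c <= 0] compare the values directly; for [c > 0] compare them after division by
     [ln (1 + g)], where [sqrt_disp g / ln (1 + g)] is antitone. *)
  destruct (Rle_lt_dec c 0) as [Hc|Hc].
  - assert (c * sqrt_disp g' <= c * sqrt_disp g)
      by (apply Rmult_le_compat_neg_l; [lra | apply sqrt_disp_nondecreasing; lra]).
    lra.
  - assert (Hw := sqrt_disp_div_ln1p_antitone g g' Hg ltac:(lra)).
    assert (HKs : K / ln (1 + g') < K / ln (1 + g))
      by (apply Rmult_lt_compat_l; [lra | apply Rinv_lt_contravar; nra]).
    assert (E : forall x, 0 < ln (1 + x) ->
      c * sqrt_disp x - ln (1 + x) + K
      = ln (1 + x) * (c * (sqrt_disp x / ln (1 + x)) - 1 + K / ln (1 + x)))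
      by (intros x Hx; field; lra).
    rewrite E in HF |- * by lra.
    assert (c * (sqrt_disp g' / ln (1 + g')) <= c * (sqrt_disp g / ln (1 + g)))
      by (apply Rmult_le_compat_l; lra).
    assert (c * (sqrt_disp g / ln (1 + g)) - 1 + K / ln (1 + g) <= 0)
      by (apply (Rmult_le_reg_l (ln (1 + g))); [lra|]; rewrite Rmult_0_r; exact HF).
    assert (c * (sqrt_disp g' / ln (1 + g')) - 1 + K / ln (1 + g') < 0) by lra.
    nra.
Qed.

Lemma Ffun_at_0 eps N D : 0 < D -> Ffun eps N D 0 = N / D.
Proof.
  intros HD. unfold Ffun, log2.
  replace (1 - 1 / (0 + 1) ^ 2) with 0 by field.
  rewrite Rmult_0_r, sqrt_0, Rplus_0_r, ln_1. field. split; [lra | apply Rgt_not_eq, ln2_pos].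
Qed.

Lemma Ffun_continuous eps N D x : 0 < D -> 0 <= x -> continuity_pt (Ffun eps N D) x.
Proof.
  intros HD Hx. unfold Ffun, log2. apply continuity_pt_filterlim.
  apply (continuous_plus
           (fun t => sqrt (1 / D * (1 - 1 / (t + 1) ^ 2)) * (Qinv eps / ln 2) - ln (1 + t) / ln 2)
           (fun _ => N / D)); [|apply continuous_const].
  apply (continuous_minus (fun t => sqrt (1 / D * (1 - 1 / (t + 1) ^ 2)) * (Qinv eps / ln 2))
           (fun t => ln (1 + t) / ln 2)).
  - apply (continuous_mult (fun t => sqrt (1 / D * (1 - 1 / (t + 1) ^ 2)))
             (fun _ => Qinv eps / ln 2)); [|apply continuous_const].
    apply continuous_sqrt_comp, (ex_derive_continuous (V := R_NormedModule)). auto_derive. nra.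
  - apply (ex_derive_continuous (V := R_NormedModule)). auto_derive. lra.
Qed.

Lemma Ffun_root_pos eps N m g : 0 < N -> 0 < m -> 0 <= g -> Ffun eps N m g = 0 -> 0 < g.
Proof.
  intros HN Hm Hg HF. destruct (Req_dec g 0) as [->|]; [|lra].
  rewrite Ffun_at_0 in HF by lra. assert (0 < N / m) by (apply Rdiv_lt_0_compat; lra). lra.
Qed.

Lemma Ffun_root_exists eps N m D g : 0 < N -> 0 < m -> m <= D -> 0 < g ->
  Ffun eps N m g = 0 -> exists g', 0 < g' /\ Ffun eps N D g' = 0.
Proof.
  intros HN Hm HmD Hg HF.
  assert (HFD := Ffun_nonpos_of_root eps N m D g HN Hm HmD ltac:(lra) HF).
  destruct (Req_dec (Ffun eps N D g) 0) as [Hz|Hneg]; [exists g; split; assumption|].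
  assert (HF0 : 0 < Ffun eps N D 0) by (rewrite Ffun_at_0 by lra; apply Rdiv_lt_0_compat; lra).
  destruct (Ranalysis5.IVT_interv (fun t => - Ffun eps N D t) 0 g) as [g' [Hg' Hroot]].
  - intros t Ht. apply continuity_pt_opp, Ffun_continuous; lra.
  - exact Hg.
  - lra.
  - lra.
  - exists g'. split; [|lra].
    apply (Ffun_root_pos eps N D); lra.
Qed.

Lemma Ffun_root_le eps N m D g g' : 0 < N -> 0 < m -> m <= D -> 0 < g ->
  Ffun eps N m g = 0 -> Ffun eps N D g' = 0 -> g' <= g.
Proof.
  intros HN Hm HmD Hg HF HF'.
  destruct (Rle_lt_dec g' g) as [|Hlt]; [assumption|].
  assert (HFD := Ffun_nonpos_of_root eps N m D g HN Hm HmD ltac:(lra) HF).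
  assert (H := Ffun_neg_of_nonpos eps N D g g' HN ltac:(lra) Hg Hlt HFD). lra.
Qed.

Lemma sqrt_disp_mul_sqrt g : 0 <= g -> sqrt_disp g * sqrt g = g * sqrt (g + 2) / (g + 1).
Proof.
  intros Hg. unfold sqrt_disp. rewrite <- sqrt_mult_alt by (apply disp_nonneg, Hg).
  replace ((1 - 1 / (g + 1) ^ 2) * g) with ((g / (g + 1)) ^ 2 * (g + 2)) by (field; lra).
  rewrite sqrt_mult_alt by apply pow2_ge_0.
  rewrite sqrt_pow2 by (apply Rmult_le_pos; [lra | apply Rlt_le, Rinv_0_lt_compat; lra]).
  field. lra.
Qed.

Lemma disp_rate_ln1p g : 0 < g -> disp_rate (ln (1 + g)) = sqrt_disp g * sqrt g / ln (1 + g).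
Proof.
  intros Hg. assert (Hs := ln1p_pos g Hg).
  unfold disp_rate. rewrite exp_ln, sqrt_disp_mul_sqrt by lra.
  replace (1 + g + 1) with (g + 2) by ring. field. lra.
Qed.

Lemma snr_rate_ln1p g : 0 < g -> snr_rate (ln (1 + g)) = g / ln (1 + g).
Proof.
  intros Hg. unfold snr_rate. rewrite exp_ln by lra. f_equal. ring.
Qed.

Lemma Ffun_energy eps N m g : 0 < N -> 0 < m -> 0 < g -> Ffun eps N m g = 0 ->
  m * g = N * energy_root (Qinv eps / sqrt N) (ln (1 + g)) ^ 2.
Proof.
  intros HN Hm Hg HF.
  assert (Hl := ln2_pos). assert (Hs := ln1p_pos g Hg).
  assert (Hroot := sqrt_mul_Ffun_mul_ln2 eps N m g Hm ltac:(lra)).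
  rewrite HF, Rmult_0_r, Rmult_0_l in Hroot.
  unfold energy_root. rewrite disp_rate_ln1p, snr_rate_ln1p by exact Hg.
  assert (Ha : 0 < sqrt m) by (apply sqrt_lt_R0; lra).
  assert (HG : 0 < sqrt g) by (apply sqrt_lt_R0; lra).
  assert (Hn : 0 < sqrt N) by (apply sqrt_lt_R0; lra).
  assert (Haa := sqrt_sqrt m ltac:(lra)). assert (HGG := sqrt_sqrt g ltac:(lra)).
  assert (Hnn := sqrt_sqrt N ltac:(lra)).
  set (q := Qinv eps) in *. set (w := sqrt_disp g) in *. set (s := ln (1 + g)) in *.
  set (a := sqrt m) in *. set (G := sqrt g) in *. set (n := sqrt N) in *.
  assert (Hms : m * s = q * w * a + ln 2 * N).
  { assert (Ha0 : a * (q * w - a * s + ln 2 * N / a) = 0) by (rewrite <- Hroot; ring).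
    replace (a * (q * w - a * s + ln 2 * N / a)) with (q * w * a - a * a * s + ln 2 * N)
      in Ha0 by (field; lra).
    rewrite <- Haa. lra. }
  (* [sqrt (m g / N)] is a positive root of the same quadratic as [energy_root] *)
  assert (HR : a * G / n = qroot (q / n * (w * G / s)) (ln 2 * (g / s))).
  { apply qroot_unique.
    - apply Rmult_le_pos; [lra|]. apply Rlt_le, Rdiv_lt_0_compat; lra.
    - apply Rdiv_lt_0_compat; nra.
    - replace ((a * G / n) ^ 2) with (a * a * (G * G) / (n * n)) by (field; lra).
      replace (q / n * (w * G / s) * (a * G / n) + ln 2 * (g / s))
        with (g * (q * w * a + ln 2 * N) / (N * s)) by (rewrite <- HGG, <- Hnn; field; lra).
      rewrite <- Hms, Haa, HGG, Hnn. field. lra. }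
  rewrite <- HR. replace ((a * G / n) ^ 2) with (a * a * (G * G) / (n * n)) by (field; lra).
  rewrite Haa, HGG, Hnn. field. lra.
Qed.

Lemma Gamma_spec eps N m D g : 0 < N -> 0 < m -> m <= D -> 0 < g -> Ffun eps N m g = 0 ->
  0 < Gamma eps N D /\ Ffun eps N D (Gamma eps N D) = 0.
Proof.
  intros HN Hm HmD Hg HF. unfold Gamma.
  apply (epsilon_spec (inhabits 0) (fun g' => 0 < g' /\ Ffun eps N D g' = 0)).
  exact (Ffun_root_exists eps N m D g HN Hm HmD Hg HF).
Qed.

Lemma qinv_ratio_cases r : r <= 2 * sqrt (ln 2) / (4 - sqrt 2) ->
  r <= 0 \/ r ^ 2 <= 3 / 5 * ln 2.
Proof.
  intros Hr. destruct (Rle_lt_dec r 0) as [|Hpos]; [left; assumption | right].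
  assert (Hl := ln2_pos).
  assert (H2 : sqrt 2 * sqrt 2 = 2) by (apply sqrt_sqrt; lra).
  assert (Hs2 : sqrt 2 <= 17 / 12) by (generalize (sqrt_pos 2); nra).
  assert (0 <= sqrt (ln 2)) by apply sqrt_pos.
  assert (Hr' : r * (4 - sqrt 2) <= 2 * sqrt (ln 2)).
  { apply (Rmult_le_compat_r (4 - sqrt 2)) in Hr; [|lra].
    replace (2 * sqrt (ln 2) / (4 - sqrt 2) * (4 - sqrt 2)) with (2 * sqrt (ln 2))
      in Hr by (field; lra).
    exact Hr. }
  assert (Hsq : (r * (4 - sqrt 2)) ^ 2 <= (2 * sqrt (ln 2)) ^ 2) by (apply pow_incr; nra).
  replace ((2 * sqrt (ln 2)) ^ 2) with (4 * ln 2) in Hsq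
    by (rewrite Rpow_mult_distr, pow2_sqrt by lra; ring).
  assert (20 / 3 <= (4 - sqrt 2) ^ 2) by nra.
  nra.
Qed.

Lemma Gamma_le_of_root eps N m D g : 0 < N ->
  Qinv eps / sqrt N <= 2 * sqrt (ln 2) / (4 - sqrt 2) ->
  0 < m -> m <= D -> 0 <= g -> Ffun eps N m g = 0 ->
  0 < Gamma eps N D /\ Ffun eps N D (Gamma eps N D) = 0 /\
  Gamma eps N D <= g /\ D * Gamma eps N D <= m * g.
Proof.
  intros HN Hr Hm HmD Hg0 HF.
  assert (Hg := Ffun_root_pos eps N m g HN Hm Hg0 HF).
  destruct (Gamma_spec eps N m D g HN Hm HmD Hg HF) as [HG HFD].
  assert (HGg := Ffun_root_le eps N m D g _ HN Hm HmD Hg HF HFD).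
  do 3 (split; [assumption|]).
  rewrite (Ffun_energy eps N m g HN Hm Hg HF), (Ffun_energy eps N D _ HN ltac:(lra) HG HFD).
  set (r := Qinv eps / sqrt N) in *.
  assert (Hmono : energy_root r (ln (1 + Gamma eps N D)) <= energy_root r (ln (1 + g))).
  { apply energy_root_nondecreasing; [apply qinv_ratio_cases, Hr | apply ln1p_pos, HG |].
    destruct (Req_dec (Gamma eps N D) g) as [->|]; [lra|]. apply Rlt_le, ln_increasing; lra. }
  assert (0 < energy_root r (ln (1 + Gamma eps N D))).
  { apply qroot_pos. apply Rmult_lt_0_compat; [apply ln2_pos | apply snr_rate_pos, ln1p_pos, HG]. }
  apply Rmult_le_compat_l; [lra|]. apply pow_incr. lra.
Qed.

Lemma sic_powers_le H1 H2 G1 G2 g1 g2 : 0 < H1 -> 0 < H2 -> 0 <= G1 <= g1 -> 0 <= G2 <= g2 ->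
  G1 / H1 <= g1 / H1 /\ G1 * G2 / H1 + G2 / H2 <= g1 * g2 / H1 + g2 / H2.
Proof.
  intros HH1 HH2 HG1 HG2.
  assert (H1i : 0 < / H1) by (apply Rinv_0_lt_compat; lra).
  assert (H2i : 0 < / H2) by (apply Rinv_0_lt_compat; lra).
  assert (G1 * G2 <= g1 * g2) by (apply Rmult_le_compat; lra).
  unfold Rdiv. split; [|apply Rplus_le_compat]; apply Rmult_le_compat_r; lra.
Qed.

Lemma sic_energy_le H1 H2 D G1 G2 m1 m2 g1 g2 : 0 < H1 -> 0 < H2 -> 0 <= G1 <= g1 ->
  0 <= D * G2 -> D * G1 <= m1 * g1 -> D * G2 <= m2 * g2 ->
  D * (G1 / H1) + D * (G1 * G2 / H1 + G2 / H2)
  <= m1 * (g1 / H1) + m2 * (g1 * g2 / H1 + g2 / H2).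
Proof.
  intros HH1 HH2 HG1 HDG2 HE1 HE2.
  replace (D * (G1 / H1) + D * (G1 * G2 / H1 + G2 / H2))
    with (D * G1 / H1 + D * G2 * (G1 / H1 + / H2)) by (field; lra).
  replace (m1 * (g1 / H1) + m2 * (g1 * g2 / H1 + g2 / H2))
    with (m1 * g1 / H1 + m2 * g2 * (g1 / H1 + / H2)) by (field; lra).
  assert (H1i : 0 < / H1) by (apply Rinv_0_lt_compat; lra).
  assert (H2i : 0 < / H2) by (apply Rinv_0_lt_compat; lra).
  unfold Rdiv. apply Rplus_le_compat; [apply Rmult_le_compat_r; lra|].
  apply Rmult_le_compat; [lra | nra | lra |]. apply Rplus_le_compat_r, Rmult_le_compat_r; lra.
Qed.

Section TwoUsers.

Variables (h1 h2 : C) (mhat Pmax D N1 N2 eps1 eps2 : R).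
Hypotheses (Hh1 : h1 <> 0%C) (Hh2 : h2 <> 0%C) (Hmhat : 0 < mhat) (HN1 : 0 < N1) (HN2 : 0 < N2).
Hypothesis Hr1 : Qinv eps1 / sqrt N1 <= 2 * sqrt (ln 2) / (4 - sqrt 2).
Hypothesis Hr2 : Qinv eps2 / sqrt N2 <= 2 * sqrt (ln 2) / (4 - sqrt 2).

Let feasible_at := feasible h1 h2 mhat Pmax D N1 N2 eps1 eps2.

Lemma Cmod_pos : 0 < Cmod h1 /\ 0 < Cmod h2.
Proof. split; apply Cmod_gt_0; assumption. Qed.

Lemma feasible_powers m1 m2 p1 p2 g1 g2 : feasible_at m1 m2 p1 p2 g1 g2 ->
  0 <= g1 /\ 0 <= g2 /\
  p1 = g1 / Cmod h1 ^ 2 /\ p2 = g1 * g2 / Cmod h1 ^ 2 + g2 / Cmod h2 ^ 2.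
Proof.
  intros (_ & _ & _ & _ & Hp1 & Hp2 & _ & _ & _ & Hg1 & Hg2).
  destruct Cmod_pos as [HC1 HC2].
  assert (Hden : 0 < p1 * Cmod h2 ^ 2 + 1) by nra.
  assert (0 <= g2) by (rewrite Hg2; apply Rdiv_le_0_compat; nra).
  subst g1 g2. split; [nra|]. split; [assumption|].
  split; field; repeat split; lra.
Qed.

Lemma feasible_Gamma_le m1 m2 p1 p2 g1 g2 : feasible_at m1 m2 p1 p2 g1 g2 ->
  (0 < Gamma eps1 N1 D /\ Ffun eps1 N1 D (Gamma eps1 N1 D) = 0 /\
   Gamma eps1 N1 D <= g1 /\ D * Gamma eps1 N1 D <= m1 * g1) /\
  (0 < Gamma eps2 N2 D /\ Ffun eps2 N2 D (Gamma eps2 N2 D) = 0 /\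
   Gamma eps2 N2 D <= g2 /\ D * Gamma eps2 N2 D <= m2 * g2).
Proof.
  intros Hf. destruct (feasible_powers _ _ _ _ _ _ Hf) as (Hg1 & Hg2 & _).
  destruct Hf as (F1 & F2 & Hm1 & Hm2 & _ & _ & _ & HmD & Hm21 & _).
  split; eapply Gamma_le_of_root; eauto; lra.
Qed.

Lemma Gamma_feasible : (exists m1 m2 p1 p2 g1 g2, feasible_at m1 m2 p1 p2 g1 g2) ->
  let G1 := Gamma eps1 N1 D in
  let G2 := Gamma eps2 N2 D in
  feasible_at D D (G1 / Cmod h1 ^ 2) (G1 * G2 / Cmod h1 ^ 2 + G2 / Cmod h2 ^ 2) G1 G2.
Proof.
  intros (m1 & m2 & p1 & p2 & g1 & g2 & Hf) G1 G2.
  destruct (feasible_Gamma_le _ _ _ _ _ _ Hf) as ((HG1 & FG1 & HGg1 & _) & (HG2 & FG2 & HGg2 & _)).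
  fold G1 G2 in HG1, FG1, HGg1, HG2, FG2, HGg2.
  destruct (feasible_powers _ _ _ _ _ _ Hf) as (Hg1 & Hg2 & Hp1 & Hp2).
  destruct Hf as (_ & _ & Hm1 & _ & _ & _ & HP & HmD & _).
  destruct Cmod_pos as [HC1 HC2].
  destruct (sic_powers_le (Cmod h1 ^ 2) (Cmod h2 ^ 2) G1 G2 g1 g2
              ltac:(nra) ltac:(nra) ltac:(lra) ltac:(lra)) as [Hle1 Hle2].
  assert (0 <= G1 / Cmod h1 ^ 2) by (apply Rdiv_le_0_compat; nra).
  assert (0 <= G1 * G2 / Cmod h1 ^ 2 + G2 / Cmod h2 ^ 2)
    by (apply Rplus_le_le_0_compat; apply Rdiv_le_0_compat; nra).
  repeat split; try assumption; try lra.
  - field. lra.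
  - field. repeat split; try lra. apply Rgt_not_eq. nra.
Qed.

Lemma Gamma_energy_le m1 m2 p1 p2 g1 g2 : feasible_at m1 m2 p1 p2 g1 g2 ->
  let G1 := Gamma eps1 N1 D in
  let G2 := Gamma eps2 N2 D in
  D * (G1 / Cmod h1 ^ 2) + D * (G1 * G2 / Cmod h1 ^ 2 + G2 / Cmod h2 ^ 2)
  <= m1 * p1 + m2 * p2.
Proof.
  intros Hf G1 G2.
  destruct (feasible_Gamma_le _ _ _ _ _ _ Hf) as ((HG1 & _ & HGg1 & HE1) & (HG2 & _ & _ & HE2)).
  fold G1 G2 in HG1, HGg1, HE1, HG2, HE2.
  destruct (feasible_powers _ _ _ _ _ _ Hf) as (_ & _ & -> & ->).
  destruct Cmod_pos as [HC1 HC2].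
  assert (0 < D) by (destruct Hf as (_ & _ & Hm1 & _ & _ & _ & _ & HmD & _); lra).
  apply sic_energy_le; [nra | nra | lra | nra | exact HE1 | exact HE2].
Qed.

End TwoUsers.

Theorem corollary2 (h1 h2 : C) (D1 D2 mhat Pmax N1 N2 eps1 eps2 : R) :
  h1 <> 0%C -> h2 <> 0%C -> Cmod h1 > Cmod h2 ->
  D1 < D2 -> 0 < mhat -> 0 < Pmax -> 0 < N1 -> 0 < N2 ->
  0 < eps1 < 1 -> 0 < eps2 < 1 ->
  Qinv eps1 / sqrt N1 <= 2 * sqrt (ln 2) / (4 - sqrt 2) ->
  Qinv eps2 / sqrt N2 <= 2 * sqrt (ln 2) / (4 - sqrt 2) ->
  (exists m1 m2 p1 p2 g1 g2,
      feasible h1 h2 mhat Pmax D1 N1 N2 eps1 eps2 m1 m2 p1 p2 g1 g2) ->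
  let g1s := Gamma eps1 N1 D1 in
  let g2s := Gamma eps2 N2 D1 in
  let p1s := g1s / Cmod h1 ^ 2 in
  let p2s := g1s * g2s / Cmod h1 ^ 2 + g2s / Cmod h2 ^ 2 in
  feasible h1 h2 mhat Pmax D1 N1 N2 eps1 eps2 D1 D1 p1s p2s g1s g2s /\
  (forall m1 m2 p1 p2 g1 g2,
      feasible h1 h2 mhat Pmax D1 N1 N2 eps1 eps2 m1 m2 p1 p2 g1 g2 ->
      D1 * p1s + D1 * p2s <= m1 * p1 + m2 * p2).
Proof.
  intros Hh1 Hh2 _ _ Hmhat _ HN1 HN2 _ _ Hr1 Hr2 Hfeas g1s g2s p1s p2s.
  split.
  - exact (Gamma_feasible h1 h2 mhat Pmax D1 N1 N2 eps1 eps2 Hh1 Hh2 Hmhat HN1 HN2 Hr1 Hr2 Hfeas).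
  - intros m1 m2 p1 p2 g1 g2 Hf.
    exact (Gamma_energy_le h1 h2 mhat Pmax D1 N1 N2 eps1 eps2 Hh1 Hh2 Hmhat HN1 HN2 Hr1 Hr2
             m1 m2 p1 p2 g1 g2 Hf).
Qed.
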